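(* Let $(X,r)$ be a non-degenerate symmetric set, $(G,r_G)$ its associated symmetric group and $(\mathcal{G},r_{\mathcal{G}})$ its permutation group with its symmetric group structure. Then: (1) $\mathrm{Ret}(\mathcal{G},r_{\mathcal{G}})\simeq \mathcal{G}(\mathrm{Ret}(X,r))$ as symmetric groups; (2) for every $j\ge0$ there is an isomorphism of symmetric groups $\mathrm{Ret}^{j+1}(G,r_G)\simeq \mathcal{G}(\mathrm{Ret}^j(X,r))$; (3) for every integer $m\ge0$, $\mathrm{mpl}(G,r_G)=m+1$ if and only if $\mathrm{mpl}(\mathcal{G},r_{\mathcal{G}})=m$.
   Context: A symmetric set is a pair $(X,r)$, $X$ nonempty, $r:X\times X\to X\times X$ a bijection $r(x,y)=({}^xy,x^y)$ that is non-degenerate (all $y\mapsto{}^xy$, $y\mapsto y^x$ bijective), involutive, and satisfies $r^{12}r^{23}r^{12}=r^{23}r^{12}r^{23}$ on $X^3$. $G=G(X,r)$ is the group generated by $X$ with relations $xy=zt$ whenever $r(x,y)=(z,t)$; $X$ embeds in $G$. A symmetric group is a pair $(G,\sigma)$, $G$ a group, $\sigma(u,v)=({}^uv,u^v)$ an involutive bijection of $G\times G$ with ${}^a1=1,{}^1u=u,1^u=1,a^1=a$, ${}^{ab}u={}^a({}^bu)$, $a^{uv}=(a^u)^v$, ${}^a(uv)=({}^au)({}^{a^u}v)$, $(ab)^u=(a^{{}^bu})(b^u)$, $uv=({}^uv)(u^v)$; $(G,r_G)$ is $G(X,r)$ with the unique such involutive braiding extending $r$. The left action $x\mapsto \mathcal{L}_x$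 ($\mathcal{L}_x(y)={}^xy$) extends to a homomorphism $\mathcal{L}:G\to\mathrm{Sym}(X)$; $\mathcal{G}(X,r)=\mathcal{L}(G)$. Its kernel equals $\mathrm{soc}(G)=\{a:{}^au=u\ \forall u\in G\}$, so $\mathcal{G}\cong G/\ker\mathcal{L}$ inherits a symmetric group structure $r_{\mathcal{G}}(\mathcal{L}_a,\mathcal{L}_b)=(\mathcal{L}_{{}^ab},\mathcal{L}_{a^b})$. Retraction: $\mathrm{Ret}(X,r)=(X/\!\sim,r_{[X]})$ with $x\sim y$ iff $\mathcal{L}_x=\mathcal{L}_y$, $r_{[X]}([x],[y])=([{}^xy],[x^y])$; for a symmetric group $\mathrm{Ret}(G,\sigma)\cong G/\mathrm{soc}(G)$ is again a symmetric group; $\mathrm{Ret}^j$ is the iterate; $\mathrm{mpl}=m$ means $m$ is minimal with $\mathrm{Ret}^m$ a one-element set. *)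

From Stdlib Require Import List ClassicalEpsilon.
Import ListNotations.


Set Universe Polymorphism.

Definition img {A B : Type} (q : A -> B) : Type := {b : B | exists a, q a = b}.

Definition into {A B : Type} (q : A -> B) (a : A) : img q :=
  exist _ (q a) (ex_intro _ a eq_refl).

Definition pre {A B : Type} (q : A -> B) (u : img q) : A :=
  proj1_sig (constructive_indefinite_description _ (proj2_sig u)).

Arguments into {A B} q a.
Arguments pre {A B} q u.

(** Quotient of A by a relation R: the type of classes R a = {a' | R a a'}. *)
Definition quot {A : Type} (R : A -> A -> Prop) : Type := img R.

(** A set X with a map r : X x X -> X x X, r(x,y) = (^x y, x^y). *)
Record BSet := { bs : Type ; br : bs -> bs -> bs * bs }.

Definition lact (B : BSet) (x y : bs B) : bs B := fst (br B x y).
Definition ract (B : BSet) (x y : bs B) : bs B := snd (br B x y).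

Definition bij {A C : Type} (f : A -> C) : Prop :=
  exists g : C -> A, (forall a, g (f a) = a) /\ (forall c, f (g c) = c).

Definition r12 (B : BSet) (t : bs B * bs B * bs B) : bs B * bs B * bs B :=
  let '(x, y, z) := t in let '(a, b) := br B x y in (a, b, z).
Definition r23 (B : BSet) (t : bs B * bs B * bs B) : bs B * bs B * bs B :=
  let '(x, y, z) := t in let '(a, b) := br B y z in (x, a, b).

Definition is_symset (B : BSet) : Prop :=
  inhabited (bs B) /\
  bij (fun p : bs B * bs B => br B (fst p) (snd p)) /\
  (forall x, bij (fun y => lact B x y)) /\
  (forall x, bij (fun y => ract B y x)) /\
  (forall x y, br B (lact B x y) (ract B x y) = (x, y)) /\
  (forall t, r12 B (r23 B (r12 B t)) = r23 B (r12 B (r23 B t))).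

Definition ret_rel (B : BSet) (x y : bs B) : Prop :=
  forall z, lact B x z = lact B y z.

Definition RetB (B : BSet) : BSet :=
  {| bs := quot (ret_rel B) ;
     br := fun u v =>
       let x := pre (ret_rel B) u in let y := pre (ret_rel B) v in
       (into (ret_rel B) (lact B x y), into (ret_rel B) (ract B x y)) |}.

Fixpoint iterB (n : nat) (B : BSet) : BSet :=
  match n with O => B | S k => RetB (iterB k B) end.

Definition singleton (T : Type) : Prop := exists a : T, forall b : T, b = a.

Definition mpl (B : BSet) (m : nat) : Prop :=
  singleton (bs (iterB m B)) /\ (forall k, k < m -> ~ singleton (bs (iterB k B))).

Record SymGroup := {
  sg : Type ;
  smul : sg -> sg -> sg ;
  sinv : sg -> sg ;
  sone : sg ;
  ssig : sg -> sg -> sg * sg }.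

Definition SG_toB (S : SymGroup) : BSet := {| bs := sg S ; br := ssig S |}.

Definition is_symgroup (S : SymGroup) : Prop :=
  let m := smul S in let e := sone S in
  let la := fun a u => fst (ssig S a u) in
  let ra := fun a u => snd (ssig S a u) in
  (forall a b c, m a (m b c) = m (m a b) c) /\
  (forall a, m e a = a) /\ (forall a, m a e = a) /\
  (forall a, m (sinv S a) a = e) /\ (forall a, m a (sinv S a) = e) /\
  (forall u v, ssig S (la u v) (ra u v) = (u, v)) /\
  (forall a, la a e = e) /\ (forall u, la e u = u) /\
  (forall u, ra e u = e) /\ (forall a, ra a e = a) /\
  (forall a b u, la (m a b) u = la a (la b u)) /\
  (forall a u v, ra a (m u v) = ra (ra a u) v) /\
  (forall a u v, la a (m u v) = m (la a u) (la (ra a u) v)) /\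
  (forall a b u, ra (m a b) u = m (ra a (la b u)) (ra b u)) /\
  (forall u v, m u v = m (la u v) (ra u v)).

Definition SG_iso (S1 S2 : SymGroup) : Prop :=
  exists f : sg S1 -> sg S2,
    bij f /\
    (forall a b, f (smul S1 a b) = smul S2 (f a) (f b)) /\
    (forall a b, ssig S2 (f a) (f b) =
                 (f (fst (ssig S1 a b)), f (snd (ssig S1 a b)))).

(** Ret(S, sigma) = S / soc(S): classes of a ~ b iff ^a u = ^b u for all u,
    with the induced group and braiding (computed on representatives). *)
Definition RetSG (S : SymGroup) : SymGroup :=
  let R := ret_rel (SG_toB S) in
  {| sg := quot R ;
     smul := fun u v => into R (smul S (pre R u) (pre R v)) ;
     sinv := fun u => into R (sinv S (pre R u)) ;
     sone := into R (sone S) ;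
     ssig := fun u v => let p := ssig S (pre R u) (pre R v) in
                        (into R (fst p), into R (snd p)) |}.

Fixpoint iterSG (n : nat) (S : SymGroup) : SymGroup :=
  match n with O => S | Datatypes.S k => RetSG (iterSG k S) end.

(** Words in X and X^{-1}: (true,x) stands for x, (false,x) for x^{-1}. *)
Definition word (B : BSet) := list (bool * bs B).

(** The congruence on words defining G(X,r) = < X | xy = zt if r(x,y)=(z,t) >. *)
Inductive grel (B : BSet) : word B -> word B -> Prop :=
| grel_refl w : grel B w w
| grel_sym w1 w2 : grel B w1 w2 -> grel B w2 w1
| grel_trans w1 w2 w3 : grel B w1 w2 -> grel B w2 w3 -> grel B w1 w3
| grel_cancel u v b x : grel B (u ++ (b, x) :: (negb b, x) :: v) (u ++ v)
| grel_rel u v x y : grel B (u ++ (true, x) :: (true, y) :: v)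
                          (u ++ (true, lact B x y) :: (true, ract B x y) :: v).

Arguments grel_refl {B} w.
Arguments grel_sym {B} w1 w2.
Arguments grel_trans {B} w1 w2 w3.
Arguments grel_cancel {B} u v b x.
Arguments grel_rel {B} u v x y.

Definition winv (B : BSet) (w : word B) : word B :=
  rev (map (fun p => (negb (fst p), snd p)) w).

Definition Gcar (B : BSet) : Type := quot (grel B).
Definition Gmul (B : BSet) (u v : Gcar B) : Gcar B :=
  into (grel B) (pre (grel B) u ++ pre (grel B) v).
Definition Ginv (B : BSet) (u : Gcar B) : Gcar B :=
  into (grel B) (winv B (pre (grel B) u)).
Definition Gone (B : BSet) : Gcar B := into (grel B) [].
Definition Giota (B : BSet) (x : bs B) : Gcar B := into (grel B) [(true, x)].

(** r_G: the (unique) involutive braiding on G(X,r) making it a symmetric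
    group and extending r. *)
Definition rG (B : BSet) : Gcar B -> Gcar B -> Gcar B * Gcar B :=
  epsilon (inhabits (fun _ _ => (Gone B, Gone B)))
    (fun s => is_symgroup {| sg := Gcar B ; smul := Gmul B ; sinv := Ginv B ;
                             sone := Gone B ; ssig := s |} /\
              forall x y, s (Giota B x) (Giota B y)
                          = (Giota B (lact B x y), Giota B (ract B x y))).

Definition GX (B : BSet) : SymGroup :=
  {| sg := Gcar B ; smul := Gmul B ; sinv := Ginv B ; sone := Gone B ;
     ssig := rG B |}.

(** Inverse of L_x (L_x is bijective for non-degenerate r). *)
Definition Linv (B : BSet) (x y : bs B) : bs B :=
  epsilon (inhabits y) (fun z => lact B x z = y).

Fixpoint Lword (B : BSet) (w : word B) (y : bs B) : bs B :=
  match w with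
  | [] => y
  | (b, x) :: w' => (if b then lact B x else Linv B x) (Lword B w' y)
  end.

Definition Lmap (B : BSet) (a : Gcar B) : bs B -> bs B := Lword B (pre (grel B) a).

(** \mathcal{G}(X,r) = L(G), with the symmetric group structure induced from
    G ≅ G/ker L: L_a L_b = L_{ab},
    r(L_a, L_b) = (L_{^a b}, L_{a^b}). *)
Definition PermG (B : BSet) : SymGroup :=
  let L := @Lmap B in
  {| sg := img L ;
     smul := fun f g => into L (Gmul B (pre L f) (pre L g)) ;
     sinv := fun f => into L (Ginv B (pre L f)) ;
     sone := into L (Gone B) ;
     ssig := fun f g => let p := rG B (pre L f) (pre L g) in
                        (into L (fst p), into L (snd p)) |}.

(* By Etingof-Schedler-Soloviev, the 1-cocycle pi(ab) = pi(a) + L_a pi(b) identifies the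
   structure group G with the free abelian group on X.  Working on words, this yields an
   explicit braiding of G ([sigmaG]), which by uniqueness is r_G, and shows that ker L is
   stable under it.  Consequently x ~ y (L_x = L_y) is compatible with L, L^-1, the right
   action and T^-1 : x |-> L_x^-1 x, so Ret X satisfies the same axioms and words over X
   map to words over Ret X compatibly with L and the braiding.  Then Ret(G) = G / ker L is
   the permutation group of X, and Ret of the permutation group of X is the permutation
   group of Ret X, both as symmetric groups.  Iterating gives (2), the first iso gives (1),
   and as G is never trivial the multipermutation levels of G and of its permutation
   group differ by exactly one. *)

From Stdlib Require Import ZArith Lia List ClassicalEpsilon FunctionalExtensionality
  PropExtensionality ProofIrrelevance Morphisms Bool.
Import ListNotations.
Set Universe Polymorphism.

Section Images.
Context {A C : Type} (q : A -> C).

Lemma pre_spec (u : img q) : q (pre q u) = proj1_sig u.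
Proof.
  unfold pre. destruct (constructive_indefinite_description _ _) as [a Ha]. exact Ha.
Qed.

Lemma into_pre (u : img q) : into q (pre q u) = u.
Proof. destruct u as [b Hb]. apply subset_eq_compat. exact (pre_spec (exist _ b Hb)). Qed.

Lemma into_eq a b : q a = q b -> into q a = into q b.
Proof. intro H. apply subset_eq_compat. exact H. Qed.

Lemma into_inj a b : into q a = into q b -> q a = q b.
Proof. intro H. exact (f_equal (@proj1_sig _ _) H). Qed.

Lemma img_ind (P : img q -> Prop) : (forall a, P (into q a)) -> forall u, P u.
Proof. intros H u. rewrite <- (into_pre u). apply H. Qed.

End Images.

Section Quotients.
Context {A : Type} (R : A -> A -> Prop) {HR : Equivalence R}.

Lemma class_eq a b : R a b -> into R a = into R b.
Proof.
  intro H. apply into_eq, functional_extensionality. intro c.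
  apply propositional_extensionality. split; intro; [symmetry in H|]; etransitivity; eauto.
Qed.

Lemma class_inj a b : into R a = into R b -> R a b.
Proof. intro H. apply into_inj in H. rewrite H. reflexivity. Qed.

Lemma pre_class a : R (pre R (into R a)) a.
Proof. pose proof (pre_spec R (into R a)) as H. simpl in H. rewrite H. reflexivity. Qed.

End Quotients.

(* The congruence on words presenting the free abelian group on X. *)
Inductive abrel (B : BSet) : word B -> word B -> Prop :=
| abrel_refl w : abrel B w w
| abrel_sym w1 w2 : abrel B w1 w2 -> abrel B w2 w1
| abrel_trans w1 w2 w3 : abrel B w1 w2 -> abrel B w2 w3 -> abrel B w1 w3
| abrel_cancel u v b x : abrel B (u ++ (b, x) :: (negb b, x) :: v) (u ++ v)
| abrel_swapTT u v x y :
    abrel B (u ++ (true, x) :: (true, y) :: v) (u ++ (true, y) :: (true, x) :: v)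
| abrel_swapTF u v x y :
    abrel B (u ++ (true, x) :: (false, y) :: v) (u ++ (false, y) :: (true, x) :: v).

Arguments abrel_refl {B} w.
Arguments abrel_sym {B} w1 w2.
Arguments abrel_trans {B} w1 w2 w3.
Arguments abrel_cancel {B} u v b x.
Arguments abrel_swapTT {B} u v x y.
Arguments abrel_swapTF {B} u v x y.

Lemma winv_app {B : BSet} (a b : word B) : winv B (a ++ b) = winv B b ++ winv B a.
Proof. unfold winv. rewrite map_app, rev_app_distr. reflexivity. Qed.

Lemma winv_cons {B : BSet} p (a : word B) : winv B (p :: a) = winv B a ++ [(negb (fst p), snd p)].
Proof. reflexivity. Qed.

Lemma winv_involutive {B : BSet} (a : word B) : winv B (winv B a) = a.
Proof.
  unfold winv. rewrite map_rev, rev_involutive, map_map.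
  rewrite <- (map_id a) at 2. apply map_ext. intros [b x]. simpl.
  rewrite negb_involutive. reflexivity.
Qed.

Section WordCongruence.
Context {B : BSet} (R : word B -> word B -> Prop) {HR : Equivalence R}.
Hypothesis R_ctx : forall a a' u v, R a a' -> R (u ++ a ++ v) (u ++ a' ++ v).
Hypothesis R_cancel : forall u v b x, R (u ++ (b, x) :: (negb b, x) :: v) (u ++ v).

Lemma cong_app : Proper (R ==> R ==> R) (@app (bool * bs B)).
Proof.
  intros a a' Ha b b' Hb. transitivity (a' ++ b).
  - exact (R_ctx a a' [] b Ha).
  - pose proof (R_ctx b b' a' [] Hb) as H. rewrite !app_nil_r in H. exact H.
Qed.
Existing Instance cong_app.

Lemma cong_winv_l a : R (winv B a ++ a) [].
Proof.
  induction a as [|[b x] a IH]; [reflexivity|].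
  rewrite winv_cons, <- app_assoc. simpl. rewrite <- IH.
  pose proof (R_cancel (winv B a) a (negb b) x) as H. rewrite negb_involutive in H. exact H.
Qed.

Lemma cong_winv_r a : R (a ++ winv B a) [].
Proof. pose proof (cong_winv_l (winv B a)) as H. rewrite winv_involutive in H. exact H. Qed.

Lemma cong_winv : Proper (R ==> R) (winv B).
Proof.
  intros a a' H. transitivity (winv B a ++ (a' ++ winv B a')).
  - rewrite cong_winv_r, app_nil_r. reflexivity.
  - rewrite app_assoc. transitivity ((winv B a ++ a) ++ winv B a').
    + apply cong_app; [apply cong_app|]; [reflexivity|symmetry; exact H|reflexivity].
    + rewrite cong_winv_l. reflexivity.
Qed.

End WordCongruence.

#[global] Instance grel_equiv (B : BSet) : Equivalence (grel B).
Proof.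
  split; [intro; apply grel_refl | intros ? ?; apply grel_sym | intros ? ? ?; apply grel_trans].
Qed.

#[global] Instance abrel_equiv (B : BSet) : Equivalence (abrel B).
Proof.
  split; [intro; apply abrel_refl | intros ? ?; apply abrel_sym | intros ? ? ?; apply abrel_trans].
Qed.

Lemma grel_ctx {B : BSet} (a a' u v : word B) :
  grel B a a' -> grel B (u ++ a ++ v) (u ++ a' ++ v).
Proof.
  intro H. induction H as [| | |u0 v0 b x|u0 v0 x y]; try (symmetry; assumption);
    try reflexivity; try (etransitivity; eassumption);
    rewrite !app_assoc, <- !(app_assoc (u ++ u0)); [apply grel_cancel | apply grel_rel].
Qed.

Lemma abrel_ctx {B : BSet} (a a' u v : word B) :
  abrel B a a' -> abrel B (u ++ a ++ v) (u ++ a' ++ v).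
Proof.
  intro H. induction H as [| | |u0 v0 b x|u0 v0 x y|u0 v0 x y]; try (symmetry; assumption);
    try reflexivity; try (etransitivity; eassumption);
    rewrite !app_assoc, <- !(app_assoc (u ++ u0));
    [apply abrel_cancel | apply abrel_swapTT | apply abrel_swapTF].
Qed.

#[global] Instance grel_app (B : BSet) :
  Proper (grel B ==> grel B ==> grel B) (@app (bool * bs B)).
Proof. exact (cong_app (grel B) grel_ctx). Qed.

#[global] Instance abrel_app (B : BSet) :
  Proper (abrel B ==> abrel B ==> abrel B) (@app (bool * bs B)).
Proof. exact (cong_app (abrel B) abrel_ctx). Qed.

#[global] Instance grel_winv (B : BSet) : Proper (grel B ==> grel B) (winv B).
Proof. exact (cong_winv (grel B) grel_ctx grel_cancel). Qed.

Lemma grel_winv_l {B : BSet} (a : word B) : grel B (winv B a ++ a) [].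
Proof. exact (cong_winv_l (grel B) grel_cancel a). Qed.

Lemma grel_winv_r {B : BSet} (a : word B) : grel B (a ++ winv B a) [].
Proof. exact (cong_winv_r (grel B) grel_cancel a). Qed.

Lemma abrel_winv_l {B : BSet} (a : word B) : abrel B (winv B a ++ a) [].
Proof. exact (cong_winv_l (abrel B) abrel_cancel a). Qed.

Lemma grel_cons {B : BSet} p (w w' : word B) : grel B w w' -> grel B (p :: w) (p :: w').
Proof. intro H. exact (grel_app B [p] [p] (reflexivity _) w w' H). Qed.

Section FreeAbelian.
Variable B : BSet.
Notation W := (word B).

Lemma abrel_swap u v p q : abrel B (u ++ p :: q :: v) (u ++ q :: p :: v).
Proof.
  destruct p as [[|] x], q as [[|] y].
  - apply abrel_swapTT.
  - apply abrel_swapTF.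
  - symmetry. apply abrel_swapTF.
  - transitivity (u ++ (false, y) :: (true, y) :: (false, x) :: (false, y) :: v).
    { symmetry. exact (abrel_cancel u ((false, x) :: (false, y) :: v) false y). }
    transitivity (u ++ (false, y) :: (false, x) :: (true, y) :: (false, y) :: v).
    + pose proof (abrel_swapTF (u ++ [(false, y)]) ((false, y) :: v) y x) as H.
      rewrite <- !app_assoc in H. exact H.
    + pose proof (abrel_cancel (u ++ [(false, y); (false, x)]) v true y) as H.
      rewrite <- !app_assoc in H. exact H.
Qed.

Lemma abrel_comm (s t : W) : abrel B (s ++ t) (t ++ s).
Proof.
  assert (Hp : forall p (t : W), abrel B (p :: t) (t ++ [p])).
  { intros p t'. induction t' as [|q t' IH]; [reflexivity|].
    transitivity (q :: p :: t'); [apply (abrel_swap [] t')|].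
    exact (abrel_app B [q] [q] (reflexivity _) _ _ IH). }
  induction s as [|p s IH]; simpl.
  - rewrite app_nil_r. reflexivity.
  - rewrite (Hp p (s ++ t)), IH, <- app_assoc, <- Hp. reflexivity.
Qed.

Lemma abrel_cancel_l (x y z : W) : abrel B (x ++ y) (z ++ x) -> abrel B y z.
Proof.
  intro H. transitivity (winv B x ++ x ++ y).
  - rewrite app_assoc, abrel_winv_l. reflexivity.
  - rewrite H, (abrel_comm z x), app_assoc, abrel_winv_l. reflexivity.
Qed.

Fixpoint wsum (h : bs B -> Z) (w : W) : Z :=
  match w with
  | [] => 0%Z
  | (b, x) :: w' => ((if b then h x else - h x) + wsum h w')%Z
  end.

Lemma wsum_app h (u v : W) : wsum h (u ++ v) = (wsum h u + wsum h v)%Z.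
Proof. induction u as [|[[|] x] u IH]; simpl; try rewrite IH; lia. Qed.

Lemma abrel_wsum h (u v : W) : abrel B u v -> wsum h u = wsum h v.
Proof. intro H. induction H; rewrite ?wsum_app; simpl; try destruct b; simpl; lia. Qed.

End FreeAbelian.

(** * The bijection of G with the free abelian group *)

Lemma bij_inj {A C : Type} (f : A -> C) : bij f -> forall a a', f a = f a' -> a = a'.
Proof. intros [g [Hg _]] a a' H. rewrite <- (Hg a), <- (Hg a'), H. reflexivity. Qed.

Lemma lact_Linv_of_bij (B : BSet) x : bij (lact B x) -> forall y, lact B x (Linv B x y) = y.
Proof.
  intros [g [_ Hg]] y. apply (epsilon_spec (inhabits y) (fun z => lact B x z = y)).
  exists (g y). apply Hg.
Qed.

(* The left-action content of a symmetric set: everything about [r] used below.  Unlike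
   [is_symset] it is visibly inherited by the retraction (Lemma [left_symset_RetB]). *)
Record left_symset (B : BSet) : Prop := {
  ls_inhabited : inhabited (bs B);
  ls_lact_bij : forall x, bij (lact B x);
  ls_ract : forall x y, ract B x y = Linv B (lact B x y) x;
  ls_braid : forall x y z,
    lact B x (lact B y z) = lact B (lact B x y) (lact B (ract B x y) z);
  ls_diag_surj : forall z, exists t, Linv B t t = z;
  ls_diag_inj : forall t t', Linv B t t = Linv B t' t' -> t = t' }.

Definition Tinv (B : BSet) (z : bs B) : bs B :=
  epsilon (inhabits z) (fun t => Linv B t t = z).

Definition mapL {B : BSet} (f : bs B -> bs B) (s : word B) : word B :=
  map (fun p => (fst p, f (snd p))) s.

(* The Etingof-Schedler-Soloviev 1-cocycle pi : G -> Z^(X), pi(ab) = pi(a) + L_a pi(b),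
   read on words; [abrel] makes its values elements of the free abelian group on X. *)
Fixpoint to_ab {B : BSet} (w : word B) : word B :=
  match w with
  | [] => []
  | (b, x) :: w' =>
      if b then (true, x) :: mapL (lact B x) (to_ab w')
      else (false, Linv B x x) :: mapL (Linv B x) (to_ab w')
  end.

(* [of_ab (Lword B a) s] is a word whose image under [to_ab] is L_a s; the twist f is the
   running action of the prefix already read. *)
Fixpoint of_ab {B : BSet} (f : bs B -> bs B) (s : word B) : word B :=
  match s with
  | [] => []
  | (b, y) :: s' =>
      if b then (true, f y) :: of_ab (fun z => Linv B (f y) (f z)) s'
      else (false, Tinv B (f y)) :: of_ab (fun z => lact B (Tinv B (f y)) (f z)) s'
  end.

Fixpoint of_ab_twist {B : BSet} (f : bs B -> bs B) (s : word B) : bs B -> bs B :=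
  match s with
  | [] => f
  | (b, y) :: s' =>
      of_ab_twist (if b then (fun z => Linv B (f y) (f z))
                   else (fun z => lact B (Tinv B (f y)) (f z))) s'
  end.

(* The braiding of G on representatives: to_ab(^a b) = L_a to_ab(b), and a^b is then
   forced by ab = (^a b)(a^b). *)
Definition wlact {B : BSet} (a b : word B) : word B := of_ab (Lword B a) (to_ab b).
Definition wract {B : BSet} (a b : word B) : word B := winv B (wlact a b) ++ a ++ b.

Section LeftSymset.
Variable B : BSet.
Hypothesis HB : left_symset B.
Notation W := (word B).
Notation L := (lact B).
Notation Li := (Linv B).
Notation Lw := (Lword B).

Lemma lact_Linv x y : L x (Li x y) = y.
Proof. exact (lact_Linv_of_bij B x (ls_lact_bij B HB x) y). Qed.

Lemma lact_inj x y y' : L x y = L x y' -> y = y'.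
Proof. exact (bij_inj _ (ls_lact_bij B HB x) y y'). Qed.

Lemma Linv_lact x y : Li x (L x y) = y.
Proof. apply (lact_inj x). apply lact_Linv. Qed.

Lemma lact_eq_Linv x y z : L x y = z <-> y = Li x z.
Proof. split; intro H; subst; [rewrite Linv_lact | rewrite lact_Linv]; reflexivity. Qed.

Lemma lact_ract x y : L (L x y) (ract B x y) = x.
Proof. rewrite (ls_ract B HB), lact_Linv. reflexivity. Qed.

Lemma Linv_Tinv z : Li (Tinv B z) (Tinv B z) = z.
Proof.
  apply (epsilon_spec (inhabits z) (fun t => Li t t = z)). apply (ls_diag_surj B HB).
Qed.

Lemma Tinv_Linv t : Tinv B (Li t t) = t.
Proof. apply (ls_diag_inj B HB). apply Linv_Tinv. Qed.

Lemma lact_Tinv z : L (Tinv B z) z = Tinv B z.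
Proof. apply lact_eq_Linv. symmetry. apply Linv_Tinv. Qed.

Lemma Lword_app (u v : W) y : Lw (u ++ v) y = Lw u (Lw v y).
Proof. induction u as [|[b x] u IH]; simpl; [|rewrite IH]; reflexivity. Qed.

Lemma Lword_winv_l (u : W) y : Lw (winv B u) (Lw u y) = y.
Proof.
  induction u as [|[[|] x] u IH]; [reflexivity| |];
    rewrite winv_cons, Lword_app; simpl; rewrite ?Linv_lact, ?lact_Linv; apply IH.
Qed.

Lemma Lword_winv_r (u : W) y : Lw u (Lw (winv B u) y) = y.
Proof. pose proof (Lword_winv_l (winv B u) y) as H. rewrite winv_involutive in H. exact H. Qed.

Lemma Lword_grel (u v : W) : grel B u v -> forall y, Lw u y = Lw v y.
Proof.
  intro H. induction H; intro z; rewrite ?Lword_app.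
  - reflexivity.
  - symmetry; auto.
  - rewrite IHgrel1; auto.
  - simpl. destruct b; simpl; rewrite ?Linv_lact, ?lact_Linv; reflexivity.
  - simpl. rewrite (ls_braid B HB). reflexivity.
Qed.

Lemma mapL_app f (u v : W) : mapL f (u ++ v) = mapL f u ++ mapL f v.
Proof. apply map_app. Qed.

Lemma mapL_comp f g (s : W) : mapL f (mapL g s) = mapL (fun z => f (g z)) s.
Proof. unfold mapL. rewrite map_map. reflexivity. Qed.

Lemma mapL_ext f g (s : W) : (forall z, f z = g z) -> mapL f s = mapL g s.
Proof. intro H. apply map_ext. intros [b x]. simpl. rewrite H. reflexivity. Qed.

Lemma mapL_id (s : W) : mapL (fun z => z) s = s.
Proof. unfold mapL. rewrite <- (map_id s) at 2. apply map_ext. intros [b x]. reflexivity. Qed.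

Lemma mapL_id_ext f (s : W) : (forall z, f z = z) -> mapL f s = s.
Proof. intro H. rewrite (mapL_ext f (fun z => z)) by exact H. apply mapL_id. Qed.

#[local] Instance abrel_mapL f : Proper (abrel B ==> abrel B) (mapL f).
Proof.
  intros s s' H. induction H; rewrite ?mapL_app; simpl.
  - reflexivity.
  - symmetry; auto.
  - etransitivity; eauto.
  - apply abrel_cancel.
  - apply abrel_swapTT.
  - apply abrel_swapTF.
Qed.

Lemma to_ab_app (u v : W) : to_ab (u ++ v) = to_ab u ++ mapL (Lw u) (to_ab v).
Proof.
  induction u as [|[[|] x] u IH]; simpl.
  - rewrite mapL_id. reflexivity.
  - rewrite IH, mapL_app, mapL_comp. reflexivity.
  - rewrite IH, mapL_app, mapL_comp. reflexivity.
Qed.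

Lemma of_ab_mapL f g (s : W) : of_ab f (mapL g s) = of_ab (fun z => f (g z)) s.
Proof. revert f. induction s as [|[[|] y] s IH]; intro f; simpl; rewrite ?IH; reflexivity. Qed.

Lemma of_ab_ext f g (s : W) : (forall z, f z = g z) -> of_ab f s = of_ab g s.
Proof. intro H. apply functional_extensionality in H. subst. reflexivity. Qed.

Lemma to_ab_of_ab f (s : W) : to_ab (of_ab f s) = mapL f s.
Proof.
  revert f. induction s as [|[[|] y] s IH]; intro f; simpl; [reflexivity| |];
    rewrite IH, mapL_comp, ?Linv_Tinv; f_equal; apply mapL_ext; intro.
  - apply lact_Linv.
  - apply Linv_lact.
Qed.

Lemma of_ab_to_ab (w : W) : of_ab (fun z => z) (to_ab w) = w.
Proof.
  induction w as [|[[|] x] w IH]; simpl; [reflexivity| |];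
    rewrite ?Tinv_Linv, of_ab_mapL; f_equal; rewrite <- IH at 2; apply of_ab_ext; intro.
  - apply Linv_lact.
  - apply lact_Linv.
Qed.

Lemma to_ab_inj (w w' : W) : to_ab w = to_ab w' -> w = w'.
Proof. intro H. rewrite <- (of_ab_to_ab w), <- (of_ab_to_ab w'), H. reflexivity. Qed.

Lemma abrel_to_ab (w w' : W) : grel B w w' -> abrel B (to_ab w) (to_ab w').
Proof.
  intro H. induction H as [| | |u v b x|u v x y].
  - reflexivity.
  - symmetry; auto.
  - etransitivity; eauto.
  - rewrite !to_ab_app. apply abrel_app; [reflexivity|]. apply abrel_mapL.
    destruct b; simpl; rewrite !mapL_comp, ?lact_Linv.
    + rewrite mapL_id_ext by (intro; apply lact_Linv). apply (abrel_cancel []).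
    + rewrite mapL_id_ext by (intro; apply Linv_lact). apply (abrel_cancel [] _ false).
  - rewrite !to_ab_app. apply abrel_app; [reflexivity|]. apply abrel_mapL. simpl.
    rewrite !mapL_comp, lact_ract.
    rewrite (mapL_ext (fun z => L (L x y) (L (ract B x y) z)) (fun z => L x (L y z)))
      by (intro; symmetry; apply (ls_braid B HB)).
    apply (abrel_swap B []).
Qed.

Lemma of_ab_app f (u v : W) : of_ab f (u ++ v) = of_ab f u ++ of_ab (of_ab_twist f u) v.
Proof. revert f. induction u as [|[[|] y] u IH]; intro f; simpl; rewrite ?IH; reflexivity. Qed.

Lemma of_ab_cancel g b x (v : W) : grel B (of_ab g ((b, x) :: (negb b, x) :: v)) (of_ab g v).
Proof.
  destruct b; simpl.
  - rewrite Tinv_Linv, (of_ab_ext _ g) by (intro; apply lact_Linv). apply (grel_cancel []).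
  - rewrite lact_Tinv, (of_ab_ext _ g) by (intro; apply Linv_lact).
    apply (grel_cancel [] _ false).
Qed.

Lemma of_ab_swapTT g x y (v : W) :
  grel B (of_ab g ((true, x) :: (true, y) :: v)) (of_ab g ((true, y) :: (true, x) :: v)).
Proof.
  simpl. set (a := g x). set (b := g y).
  assert (E : forall z, Li (Li a b) (Li a (g z)) = Li (Li b a) (Li b (g z))).
  { intro z. apply lact_eq_Linv. apply (lact_inj b). rewrite lact_Linv.
    transitivity (L a (L (Li a b) (Li (Li a b) (Li a (g z))))).
    - rewrite (ls_braid B HB), (ls_ract B HB), !lact_Linv. reflexivity.
    - rewrite !lact_Linv. reflexivity. }
  rewrite (of_ab_ext _ _ v E).
  replace ((true, b) :: (true, Li b a) :: _)
    with ((true, L a (Li a b)) :: (true, ract B a (Li a b))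
            :: of_ab (fun z => Li (Li b a) (Li b (g z))) v)
    by (rewrite lact_Linv, (ls_ract B HB), lact_Linv; reflexivity).
  apply (grel_rel []).
Qed.

Lemma of_ab_swapTF g x y (v : W) :
  grel B (of_ab g ((true, x) :: (false, y) :: v)) (of_ab g ((false, y) :: (true, x) :: v)).
Proof.
  simpl. set (a := g x). set (b := g y). set (s := Tinv B b).
  set (u := L s a). set (t := ract B s a).
  assert (Et : Tinv B (Li a b) = t).
  { rewrite <- (Tinv_Linv t). f_equal. apply (lact_inj a). rewrite lact_Linv.
    unfold b. rewrite <- (Linv_Tinv (g y)). fold b s.
    apply (lact_inj s). rewrite lact_Linv, (ls_braid B HB), lact_Linv. symmetry. apply lact_ract. }
  assert (E : forall z, L t (Li a (g z)) = Li u (L s (g z))).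
  { intro z. apply (lact_inj u). rewrite lact_Linv. unfold u, t.
    rewrite <- (ls_braid B HB), lact_Linv. reflexivity. }
  rewrite Et, (of_ab_ext _ _ v E).
  transitivity ((false, s) :: (true, s) :: (true, a) :: (false, t)
                  :: of_ab (fun z => Li u (L s (g z))) v).
  { symmetry. apply (grel_cancel [] _ false). }
  apply grel_cons.
  transitivity ((true, u) :: (true, t) :: (false, t) :: of_ab (fun z => Li u (L s (g z))) v).
  - apply (grel_rel []).
  - apply grel_cons. apply (grel_cancel []).
Qed.

Lemma grel_of_ab (s s' : W) : abrel B s s' -> forall f, grel B (of_ab f s) (of_ab f s').
Proof.
  intro H. induction H as [| | |u v b x|u v x y|u v x y]; intro f.
  - reflexivity.
  - symmetry; auto.
  - etransitivity; eauto.
  - rewrite !of_ab_app. apply grel_app; [reflexivity | apply of_ab_cancel].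
  - rewrite !of_ab_app. apply grel_app; [reflexivity | apply of_ab_swapTT].
  - rewrite !of_ab_app. apply grel_app; [reflexivity | apply of_ab_swapTF].
Qed.

Lemma grel_iff_abrel (w w' : W) : grel B w w' <-> abrel B (to_ab w) (to_ab w').
Proof.
  split; [apply abrel_to_ab|]. intro H.
  pose proof (grel_of_ab _ _ H (fun z => z)) as H'. rewrite !of_ab_to_ab in H'. exact H'.
Qed.

Lemma wlact_ext (a a' b : W) : (forall y, Lw a y = Lw a' y) -> wlact a b = wlact a' b.
Proof. intro H. apply of_ab_ext. exact H. Qed.

Lemma to_ab_wlact (a b : W) : to_ab (wlact a b) = mapL (Lw a) (to_ab b).
Proof. apply to_ab_of_ab. Qed.

#[local] Instance wlact_grel : Proper (grel B ==> grel B ==> grel B) wlact.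
Proof.
  intros a a' Ha b b' Hb. rewrite (wlact_ext a a' b) by (apply Lword_grel; exact Ha).
  apply grel_of_ab, abrel_to_ab, Hb.
Qed.

#[local] Instance wract_grel : Proper (grel B ==> grel B ==> grel B) wract.
Proof. intros a a' Ha b b' Hb. unfold wract. rewrite Ha, Hb. reflexivity. Qed.

Lemma wlact_nil_l (b : W) : wlact [] b = b.
Proof. apply of_ab_to_ab. Qed.

Lemma wlact_app_l (a c b : W) : wlact (a ++ c) b = wlact a (wlact c b).
Proof.
  unfold wlact at 2 3. rewrite to_ab_of_ab, of_ab_mapL.
  apply of_ab_ext. intro. apply Lword_app.
Qed.

Lemma wlact_gen (a : W) y : wlact a [(true, y)] = [(true, Lw a y)].
Proof. reflexivity. Qed.

Lemma Lword_wract (a b : W) y : Lw (wract a b) y = Lw (winv B (wlact a b)) (Lw a (Lw b y)).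
Proof. unfold wract. rewrite !Lword_app. reflexivity. Qed.

Lemma wlact_app_r (a u v : W) : wlact a (u ++ v) = wlact a u ++ wlact (wract a u) v.
Proof.
  apply to_ab_inj. rewrite !to_ab_wlact, !to_ab_app, !to_ab_wlact, mapL_app, !mapL_comp.
  f_equal. apply mapL_ext. intro z. rewrite Lword_wract, Lword_winv_r. reflexivity.
Qed.

Lemma to_ab_winv (c : W) : abrel B (mapL (Lw c) (to_ab (winv B c))) (winv B (to_ab c)).
Proof.
  assert (H : abrel B (to_ab c ++ mapL (Lw c) (to_ab (winv B c))) []).
  { rewrite <- to_ab_app. apply (abrel_to_ab _ []), grel_winv_r. }
  transitivity (winv B (to_ab c) ++ to_ab c ++ mapL (Lw c) (to_ab (winv B c))).
  - rewrite app_assoc, abrel_winv_l. reflexivity.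
  - rewrite H, app_nil_r. reflexivity.
Qed.

Lemma wlact_involutive (a b : W) : grel B (wlact (wlact a b) (wract a b)) a.
Proof.
  apply grel_iff_abrel. rewrite to_ab_wlact. unfold wract.
  rewrite !to_ab_app, !mapL_app, !mapL_comp.
  rewrite (mapL_id_ext (fun z => Lw (wlact a b) (Lw (winv B (wlact a b)) z)))
    by (intro; apply Lword_winv_r).
  rewrite (mapL_ext (fun z => Lw (wlact a b) (Lw (winv B (wlact a b)) (Lw a z))) (Lw a))
    by (intro; apply Lword_winv_r).
  rewrite to_ab_winv, to_ab_wlact, (abrel_comm B (to_ab a)), app_assoc, abrel_winv_l.
  reflexivity.
Qed.

Lemma wract_involutive (a b : W) : grel B (wract (wlact a b) (wract a b)) b.
Proof.
  unfold wract at 1. rewrite wlact_involutive. unfold wract.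
  rewrite (app_assoc (wlact a b)), grel_winv_r. simpl.
  rewrite app_assoc, grel_winv_l. reflexivity.
Qed.

(* The kernel of L is stable under the left action: write g c = c' g with c' = g c g^-1,
   which also acts trivially, and compare the [to_ab] images. *)
Lemma Lword_wlact_ker (g c : W) :
  (forall y, Lw c y = y) -> forall y, Lw (wlact g c) y = y.
Proof.
  intro Hc. set (c' := g ++ c ++ winv B g).
  assert (Hc' : forall z, Lw c' z = z).
  { intro z. unfold c'. rewrite !Lword_app, Hc. apply Lword_winv_r. }
  assert (E : grel B (g ++ c) (c' ++ g)).
  { unfold c'. rewrite <- !app_assoc, grel_winv_l, app_nil_r. reflexivity. }
  apply abrel_to_ab in E. rewrite !to_ab_app, (mapL_id_ext _ _ Hc') in E.
  apply abrel_cancel_l in E. rewrite <- to_ab_wlact in E. apply grel_iff_abrel in E.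
  intro y. rewrite (Lword_grel _ _ E). apply Hc'.
Qed.

Lemma Lword_wlact (a a' b b' : W) :
  (forall y, Lw a y = Lw a' y) -> (forall y, Lw b y = Lw b' y) ->
  forall y, Lw (wlact a b) y = Lw (wlact a' b') y.
Proof.
  intros Ha Hb y. rewrite (wlact_ext a a' b Ha). set (c := winv B b ++ b').
  assert (E : grel B b' (b ++ c)) by (unfold c; rewrite app_assoc, grel_winv_r; reflexivity).
  rewrite (Lword_grel _ _ (wlact_grel _ _ (reflexivity a') _ _ E)), wlact_app_r, Lword_app.
  rewrite (Lword_wlact_ker (wract a' b) c); [reflexivity|].
  intro z. unfold c. rewrite Lword_app, <- Hb. apply Lword_winv_l.
Qed.

Lemma Lword_winv (a a' : W) :
  (forall y, Lw a y = Lw a' y) -> forall y, Lw (winv B a) y = Lw (winv B a') y.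
Proof.
  intros H y. rewrite <- (Lword_winv_l a' (Lw (winv B a) y)), <- H, Lword_winv_r. reflexivity.
Qed.

Lemma Lword_wract_ext (a a' b b' : W) :
  (forall y, Lw a y = Lw a' y) -> (forall y, Lw b y = Lw b' y) ->
  forall y, Lw (wract a b) y = Lw (wract a' b') y.
Proof.
  intros Ha Hb y. rewrite !Lword_wract, Hb, Ha. apply Lword_winv, Lword_wlact; assumption.
Qed.

Lemma wract_nil_l (u : W) : grel B (wract [] u) [].
Proof. unfold wract. rewrite wlact_nil_l. apply grel_winv_l. Qed.

Lemma wract_nil_r (a : W) : grel B (wract a []) a.
Proof. unfold wract. simpl. rewrite app_nil_r. reflexivity. Qed.

Lemma wract_app_r (a u v : W) : grel B (wract a (u ++ v)) (wract (wract a u) v).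
Proof.
  unfold wract at 1 2. rewrite wlact_app_r, winv_app. unfold wract.
  rewrite <- !app_assoc. reflexivity.
Qed.

Lemma wract_app_l (a b u : W) :
  grel B (wract (a ++ b) u) (wract a (wlact b u) ++ wract b u).
Proof.
  unfold wract. rewrite wlact_app_l, <- !app_assoc.
  apply grel_app; [reflexivity|]. apply grel_app; [reflexivity|].
  rewrite (app_assoc (wlact b u)), grel_winv_r. reflexivity.
Qed.

Lemma app_wlact_wract (u v : W) : grel B (u ++ v) (wlact u v ++ wract u v).
Proof. unfold wract. rewrite app_assoc, grel_winv_r. reflexivity. Qed.

Lemma wract_gen x y : grel B (wract [(true, x)] [(true, y)]) [(true, ract B x y)].
Proof.
  unfold wract. rewrite wlact_gen. simpl.
  transitivity [(false, L x y); (true, L x y); (true, ract B x y)].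
  - apply grel_cons. apply (grel_rel []).
  - apply (grel_cancel [] _ false).
Qed.
End LeftSymset.

(** * The braided structure group *)

Definition cl {B : BSet} (w : word B) : Gcar B := into (grel B) w.
Definition pr {B : BSet} (u : Gcar B) : word B := pre (grel B) u.

Definition sigmaG (B : BSet) (a u : Gcar B) : Gcar B * Gcar B :=
  (cl (wlact (pr a) (pr u)), cl (wract (pr a) (pr u))).

Definition Gwith (B : BSet) (s : Gcar B -> Gcar B -> Gcar B * Gcar B) : SymGroup :=
  {| sg := Gcar B ; smul := Gmul B ; sinv := Ginv B ; sone := Gone B ; ssig := s |}.

Definition braiding_spec (B : BSet) (s : Gcar B -> Gcar B -> Gcar B * Gcar B) : Prop :=
  is_symgroup (Gwith B s) /\
  forall x y, s (Giota B x) (Giota B y) = (Giota B (lact B x y), Giota B (ract B x y)).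

Section StructureGroup.
Variable B : BSet.
Notation W := (word B).
Notation G := (Gcar B).

Lemma cl_pr (u : G) : cl (pr u) = u.
Proof. apply into_pre. Qed.

Lemma pr_cl (w : W) : grel B (pr (cl w)) w.
Proof. exact (pre_class (grel B) w). Qed.

Lemma cl_eq (w w' : W) : grel B w w' -> cl w = cl w'.
Proof. exact (class_eq (grel B) w w'). Qed.

Lemma cl_inj (w w' : W) : cl w = cl w' -> grel B w w'.
Proof. exact (class_inj (grel B) w w'). Qed.

Lemma Gcar_ind (P : G -> Prop) : (forall w, P (cl w)) -> forall u, P u.
Proof. apply img_ind. Qed.

Lemma Gmul_cl (a b : W) : Gmul B (cl a) (cl b) = cl (a ++ b).
Proof. apply cl_eq, grel_app; apply pr_cl. Qed.

Lemma Ginv_cl (a : W) : Ginv B (cl a) = cl (winv B a).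
Proof. apply cl_eq, grel_winv, pr_cl. Qed.

Lemma Gone_cl : Gone B = cl [].
Proof. reflexivity. Qed.

Lemma Giota_cl x : Giota B x = cl [(true, x)].
Proof. reflexivity. Qed.

Lemma Gmul_assoc a b c : Gmul B a (Gmul B b c) = Gmul B (Gmul B a b) c.
Proof.
  revert a b c. refine (Gcar_ind _ (fun a => Gcar_ind _ (fun b => Gcar_ind _ (fun c => _)))).
  rewrite !Gmul_cl, app_assoc. reflexivity.
Qed.

Lemma Gmul_1l a : Gmul B (Gone B) a = a.
Proof. revert a. apply Gcar_ind. intro a. apply Gmul_cl. Qed.

Lemma Gmul_1r a : Gmul B a (Gone B) = a.
Proof. revert a. apply Gcar_ind. intro a. rewrite Gone_cl, Gmul_cl, app_nil_r. reflexivity. Qed.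

Lemma Gmul_Vl a : Gmul B (Ginv B a) a = Gone B.
Proof. revert a. apply Gcar_ind. intro a. rewrite Ginv_cl, Gmul_cl. apply cl_eq, grel_winv_l. Qed.

Lemma Gmul_Vr a : Gmul B a (Ginv B a) = Gone B.
Proof. revert a. apply Gcar_ind. intro a. rewrite Ginv_cl, Gmul_cl. apply cl_eq, grel_winv_r. Qed.

Lemma Ginv_unique e x : Gmul B e x = Gone B -> e = Ginv B x.
Proof. intro H. rewrite <- (Gmul_1r e), <- (Gmul_Vr x), Gmul_assoc, H, Gmul_1l. reflexivity. Qed.

Lemma Ginv_involutive a : Ginv B (Ginv B a) = a.
Proof. symmetry. apply Ginv_unique, Gmul_Vr. Qed.

Lemma Gmul_cancel_l c e r : c = Gmul B e r -> r = Gmul B (Ginv B e) c.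
Proof. intro H. rewrite H, Gmul_assoc, Gmul_Vl, Gmul_1l. reflexivity. Qed.

End StructureGroup.

Section Braiding.
Variable B : BSet.
Hypothesis HB : left_symset B.
Notation W := (word B).
Notation G := (Gcar B).
Notation L := (lact B).
Notation Li := (Linv B).
Notation Lw := (Lword B).

Lemma Lmap_cl (w : W) : Lmap B (cl w) = Lw w.
Proof. apply functional_extensionality, (Lword_grel B HB), pr_cl. Qed.

Lemma Lmap_mul a b y : Lmap B (Gmul B a b) y = Lmap B a (Lmap B b y).
Proof.
  revert a b. refine (Gcar_ind _ _ (fun a => Gcar_ind _ _ (fun b => _))).
  rewrite Gmul_cl, !Lmap_cl. apply (Lword_app B).
Qed.

Lemma Lmap_iota x y : Lmap B (Giota B x) y = L x y.
Proof. rewrite Giota_cl, Lmap_cl. reflexivity. Qed.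

Lemma Lmap_inv_iota x y : Lmap B (Ginv B (Giota B x)) y = Li x y.
Proof. rewrite Giota_cl, Ginv_cl, Lmap_cl. reflexivity. Qed.

Lemma sigmaG_cl (a b : W) : sigmaG B (cl a) (cl b) = (cl (wlact a b), cl (wract a b)).
Proof.
  unfold sigmaG. f_equal; apply cl_eq;
    [apply (wlact_grel B HB) | apply (wract_grel B HB)]; apply pr_cl.
Qed.

Ltac class_intro x := revert x; apply Gcar_ind; intro x.
Ltac push_cl := repeat (rewrite ?Gmul_cl, ?Ginv_cl, ?sigmaG_cl; cbn [fst snd]).

Lemma sigmaG_spec : braiding_spec B (sigmaG B).
Proof.
  split.
  - unfold is_symgroup. cbn -[Gmul Ginv sigmaG]. rewrite Gone_cl.
    repeat split.
    + intros a b c. class_intro a. class_intro b. class_intro c. push_cl.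
      rewrite app_assoc. reflexivity.
    + intro a. class_intro a. push_cl. reflexivity.
    + intro a. class_intro a. push_cl. rewrite app_nil_r. reflexivity.
    + intro a. class_intro a. push_cl. apply cl_eq, grel_winv_l.
    + intro a. class_intro a. push_cl. apply cl_eq, grel_winv_r.
    + intros u v. class_intro u. class_intro v. push_cl.
      f_equal; apply cl_eq; [apply (wlact_involutive B HB) | apply (wract_involutive B HB)].
    + intro a. class_intro a. push_cl. reflexivity.
    + intro u. class_intro u. push_cl. rewrite (wlact_nil_l B HB). reflexivity.
    + intro u. class_intro u. push_cl. apply cl_eq, (wract_nil_l B HB).
    + intro a. class_intro a. push_cl. apply cl_eq, wract_nil_r.
    + intros a b u. class_intro a. class_intro b. class_intro u. push_cl.
      rewrite (wlact_app_l B HB). reflexivity.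
    + intros a u v. class_intro a. class_intro u. class_intro v. push_cl.
      apply cl_eq, (wract_app_r B HB).
    + intros a u v. class_intro a. class_intro u. class_intro v. push_cl.
      rewrite (wlact_app_r B HB). reflexivity.
    + intros a b u. class_intro a. class_intro b. class_intro u. push_cl.
      apply cl_eq, (wract_app_l B HB).
    + intros u v. class_intro u. class_intro v. push_cl. apply cl_eq, (app_wlact_wract B).
  - intros x y. rewrite !Giota_cl, sigmaG_cl, (wlact_gen B). f_equal.
    apply cl_eq, (wract_gen B).
Qed.

(* A braiding is determined by ^c on generators and their inverses, via
   ^c (uv) = ^c u ^(c^u) v and c^u = (^c u)^-1 c u; and these values are forced:
   ^c y by ^(ab) = ^a ^b, and ^c y^-1 by ^c (y^-1 y) = 1. *)
Section Uniqueness.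
Variable s : G -> G -> G * G.
Hypothesis Hs : braiding_spec B s.
Local Notation la a u := (fst (s a u)).
Local Notation ra a u := (snd (s a u)).

Lemma spec_lact_one u : la (Gone B) u = u.
Proof. destruct Hs as [(_&_&_&_&_&_&_&H&_) _]. apply H. Qed.

Lemma spec_lact_one_r a : la a (Gone B) = Gone B.
Proof. destruct Hs as [(_&_&_&_&_&_&H&_) _]. apply H. Qed.

Lemma spec_lact_mul a b u : la (Gmul B a b) u = la a (la b u).
Proof. destruct Hs as [(_&_&_&_&_&_&_&_&_&_&H&_) _]. apply H. Qed.

Lemma spec_lact_mul_r a u v : la a (Gmul B u v) = Gmul B (la a u) (la (ra a u) v).
Proof. destruct Hs as [(_&_&_&_&_&_&_&_&_&_&_&_&H&_) _]. apply H. Qed.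

Lemma spec_ract a u : ra a u = Gmul B (Ginv B (la a u)) (Gmul B a u).
Proof.
  apply Gmul_cancel_l. destruct Hs as [(_&_&_&_&_&_&_&_&_&_&_&_&_&_&H) _]. apply H.
Qed.

Lemma spec_lact_gen x y : la (Giota B x) (Giota B y) = Giota B (L x y).
Proof. rewrite (proj2 Hs). reflexivity. Qed.

Lemma spec_lact_iota c y : la c (Giota B y) = Giota B (Lmap B c y).
Proof.
  revert c y. refine (Gcar_ind _ (fun c => forall y, _) _).
  intro w. induction w as [|[[|] x] w IH]; intro y.
  - rewrite <- Gone_cl, spec_lact_one, Gone_cl, Lmap_cl. reflexivity.
  - change (cl ((true, x) :: w)) with (cl ([(true, x)] ++ w)). rewrite <- Gmul_cl, <- Giota_cl.
    rewrite spec_lact_mul, IH, spec_lact_gen, Lmap_mul, Lmap_iota. reflexivity.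
  - change (cl ((false, x) :: w)) with (cl (winv B [(true, x)] ++ w)).
    rewrite <- Gmul_cl, <- Ginv_cl, <- Giota_cl, spec_lact_mul, IH, Lmap_mul.
    set (z := Lmap B (cl w) y).
    rewrite <- (lact_Linv B HB x z) at 1. rewrite <- spec_lact_gen, <- spec_lact_mul.
    rewrite Gmul_Vl, spec_lact_one, Lmap_inv_iota. reflexivity.
Qed.

Lemma spec_lact_iota_inv c y :
  la c (Ginv B (Giota B y)) = Ginv B (Giota B (Tinv B (Lmap B c (Li y y)))).
Proof.
  set (d := Ginv B (Giota B y)). set (q := Lmap B (ra c d) y).
  assert (He : la c d = Ginv B (Giota B q)).
  { apply Ginv_unique. unfold q. rewrite <- spec_lact_iota, <- spec_lact_mul_r.
    unfold d. rewrite Gmul_Vl. apply spec_lact_one_r. }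
  assert (Hq : L q (Lmap B c (Li y y)) = q).
  { unfold q at 2. rewrite spec_ract, Lmap_mul, He, Ginv_involutive, Lmap_iota, Lmap_mul.
    unfold d. rewrite Lmap_inv_iota. reflexivity. }
  rewrite He. do 3 f_equal. apply (ls_diag_inj B HB). rewrite (Linv_Tinv B HB).
  symmetry. apply (lact_eq_Linv B HB), Hq.
Qed.

End Uniqueness.

Lemma braiding_spec_unique s s' : braiding_spec B s -> braiding_spec B s' -> s = s'.
Proof.
  intros Hs Hs'.
  assert (Hla : forall u a, fst (s a u) = fst (s' a u)).
  { refine (Gcar_ind _ (fun u => forall a, _) _). intro u.
    induction u as [|[b x] w IH]; intro a.
    - rewrite <- Gone_cl, (spec_lact_one_r s Hs), (spec_lact_one_r s' Hs'). reflexivity.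
    - set (g := if b then Giota B x else Ginv B (Giota B x)).
      replace (cl ((b, x) :: w)) with (Gmul B g (cl w))
        by (unfold g; destruct b; rewrite ?Giota_cl, ?Ginv_cl, Gmul_cl; reflexivity).
      assert (Hg : forall a, fst (s a g) = fst (s' a g)).
      { intro a'. unfold g. destruct b.
        - rewrite (spec_lact_iota s Hs), (spec_lact_iota s' Hs'). reflexivity.
        - rewrite (spec_lact_iota_inv s Hs), (spec_lact_iota_inv s' Hs'). reflexivity. }
      rewrite (spec_lact_mul_r s Hs), (spec_lact_mul_r s' Hs'),
        (spec_ract s Hs), (spec_ract s' Hs'), Hg, IH.
      reflexivity. }
  apply functional_extensionality. intro a. apply functional_extensionality. intro u.
  rewrite (surjective_pairing (s a u)), (surjective_pairing (s' a u)).
  rewrite (spec_ract s Hs), (spec_ract s' Hs'), Hla. reflexivity.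
Qed.

Lemma rG_eq : rG B = sigmaG B.
Proof.
  apply braiding_spec_unique; [|apply sigmaG_spec].
  exact (epsilon_spec _ (braiding_spec B) (ex_intro _ (sigmaG B) sigmaG_spec)).
Qed.

End Braiding.

(** * The retraction *)

#[global] Instance ret_rel_equiv (B : BSet) : Equivalence (ret_rel B).
Proof.
  unfold ret_rel. split; intro; intros; [reflexivity | symmetry; auto | etransitivity; eauto].
Qed.

Section RetractionWellDefined.
Variable B : BSet.
Hypothesis HB : left_symset B.
Notation W := (word B).
Notation L := (lact B).
Notation Li := (Linv B).
Notation Lw := (Lword B).
Notation sim := (ret_rel B).

Lemma ret_rel_Lword (g : W) u u' : sim u u' -> sim (Lw g u) (Lw g u').
Proof.
  intros H z. exact (Lword_wlact B HB g g [(true, u)] [(true, u')] (fun _ => eq_refl) H z).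
Qed.

Lemma ret_rel_lact x u u' : sim u u' -> sim (L x u) (L x u').
Proof. apply (ret_rel_Lword [(true, x)]). Qed.

Lemma ret_rel_Linv x u u' : sim u u' -> sim (Li x u) (Li x u').
Proof. apply (ret_rel_Lword [(false, x)]). Qed.

Lemma Linv_ret_rel x x' z : sim x x' -> Li x z = Li x' z.
Proof. intro H. apply (lact_eq_Linv B HB). rewrite <- H. apply (lact_Linv B HB). Qed.

(* [s] lies in the image under [to_ab] of the kernel of L. *)
Definition ker_ab (s : W) : Prop := forall z, Lw (of_ab (fun z => z) s) z = z.

Lemma ker_ab_abrel s s' : abrel B s s' -> ker_ab s -> ker_ab s'.
Proof.
  intros H Hs z. rewrite <- (Lword_grel B HB _ _ (grel_of_ab B HB _ _ H _)). apply Hs.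
Qed.

Lemma ker_ab_to_ab (c : W) : (forall z, Lw c z = z) -> ker_ab (to_ab c).
Proof. intros H z. rewrite (of_ab_to_ab B HB). apply H. Qed.

Lemma ker_ab_mapL (g : W) s : ker_ab s -> ker_ab (mapL (Lw g) s).
Proof.
  intros Hs z. rewrite (of_ab_mapL B).
  rewrite <- (mapL_id B s), <- (to_ab_of_ab B HB (fun z => z) s).
  apply (Lword_wlact_ker B HB), Hs.
Qed.

Lemma Lword_of_ab_twist f (s : W) z : Lw (of_ab f s) (of_ab_twist f s z) = f z.
Proof.
  revert f z. induction s as [|[[|] y] s IH]; intros f z; simpl; [reflexivity| |];
    rewrite IH; [apply (lact_Linv B HB) | apply (Linv_lact B HB)].
Qed.

Lemma Lword_of_ab_app_ker (v s : W) :
  ker_ab s -> forall z, Lw (of_ab (fun z => z) (v ++ s)) z = Lw (of_ab (fun z => z) v) z.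
Proof.
  intros Hs z. rewrite (of_ab_app B), (Lword_app B). f_equal.
  set (h := of_ab (fun z => z) v).
  rewrite (of_ab_ext B (of_ab_twist (fun z => z) v) (Lw (winv B h))).
  - pose proof (ker_ab_mapL (winv B h) s Hs z) as E. rewrite (of_ab_mapL B) in E. exact E.
  - intro q. rewrite <- (Lword_of_ab_twist (fun z => z) v q) at 2. fold h.
    rewrite (Lword_winv_l B HB). reflexivity.
Qed.

(* In abelian coordinates [Tinv y] is the inverse of -y (as to_ab [(false, t)] is
   [(false, Li t t)]), and y - y' lies in the image of ker L when y ~ y'. *)
Lemma ret_rel_Tinv y y' : sim y y' -> sim (Tinv B y) (Tinv B y').
Proof.
  intro H.
  assert (Hs : ker_ab [(true, y); (false, y')]).
  { assert (H1 : ker_ab (mapL (Lw [(true, y')]) (to_ab [(false, y'); (true, y)]))).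
    { apply ker_ab_mapL, ker_ab_to_ab. intro z. simpl. rewrite (H z). apply (Linv_lact B HB). }
    cbn in H1. rewrite !(lact_Linv B HB) in H1.
    exact (ker_ab_abrel _ _ (abrel_swap B [] [] _ _) H1). }
  assert (E : forall z, Lw (of_ab (fun z => z) [(false, y')]) z
                        = Lw (of_ab (fun z => z) [(false, y)]) z).
  { intro z. rewrite <- (Lword_of_ab_app_ker [(false, y)] _ Hs).
    apply (Lword_grel B HB), (grel_of_ab B HB). symmetry.
    apply (abrel_cancel [] [(false, y')] false). }
  intro z. simpl in E. symmetry. apply (lact_eq_Linv B HB).
  rewrite E. symmetry. apply (Linv_lact B HB).
Qed.

Lemma ret_rel_ract x x' y y' : sim x x' -> sim y y' -> sim (ract B x y) (ract B x' y').
Proof.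
  intros Hx Hy. rewrite !(ls_ract B HB).
  assert (E : sim (L x y) (L x' y')).
  { transitivity (L x y'); [apply ret_rel_lact, Hy|]. intro z. rewrite (Hx y'). reflexivity. }
  rewrite (Linv_ret_rel _ _ x E). apply ret_rel_Linv, Hx.
Qed.

End RetractionWellDefined.

Definition cls {B : BSet} (x : bs B) : bs (RetB B) := into (ret_rel B) x.

Definition wcls {B : BSet} (w : word B) : word (RetB B) := map (fun p => (fst p, cls (snd p))) w.

Section Retraction.
Variable B : BSet.
Hypothesis HB : left_symset B.
Notation W := (word B).
Notation L := (lact B).
Notation Li := (Linv B).
Notation Lw := (Lword B).
Notation sim := (ret_rel B).
Notation RB := (RetB B).

Lemma cls_eq x y : sim x y -> cls x = cls y.
Proof. exact (class_eq (ret_rel B) x y). Qed.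

Lemma cls_inj x y : cls x = cls y -> sim x y.
Proof. exact (class_inj (ret_rel B) x y). Qed.

Lemma pre_cls x : sim (pre (ret_rel B) (cls x)) x.
Proof. exact (pre_class (ret_rel B) x). Qed.

Lemma RetB_ind (P : bs RB -> Prop) : (forall x, P (cls x)) -> forall c, P c.
Proof. apply img_ind. Qed.

Lemma lact_cls x y : lact RB (cls x) (cls y) = cls (L x y).
Proof.
  apply cls_eq. transitivity (L x (pre (ret_rel B) (cls y))).
  - intro z. rewrite (pre_cls x _). reflexivity.
  - apply (ret_rel_lact B HB), pre_cls.
Qed.

Lemma ract_cls x y : ract RB (cls x) (cls y) = cls (ract B x y).
Proof. apply cls_eq, (ret_rel_ract B HB); apply pre_cls. Qed.

Lemma Linv_cls x y : Linv RB (cls x) (cls y) = cls (Li x y).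
Proof.
  assert (Hinj : forall c c', lact RB (cls x) c = lact RB (cls x) c' -> c = c').
  { refine (RetB_ind _ (fun a => RetB_ind _ (fun b => _))). rewrite !lact_cls. intro H.
    apply cls_inj, (ret_rel_Linv B HB x) in H. rewrite !(Linv_lact B HB) in H.
    apply cls_eq, H. }
  apply Hinj. rewrite lact_cls, (lact_Linv B HB).
  apply (epsilon_spec (inhabits (cls y)) (fun z => lact RB (cls x) z = cls y)).
  exists (cls (Li x y)). rewrite lact_cls, (lact_Linv B HB). reflexivity.
Qed.

Lemma left_symset_RetB : left_symset RB.
Proof.
  destruct (ls_inhabited B HB) as [x0]. split.
  - exact (inhabits (cls x0)).
  - refine (RetB_ind _ (fun x => _)). exists (Linv RB (cls x)). split.
    + refine (RetB_ind _ (fun y => _)). rewrite lact_cls, Linv_cls, (Linv_lact B HB). reflexivity.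
    + refine (RetB_ind _ (fun y => _)). rewrite Linv_cls, lact_cls, (lact_Linv B HB). reflexivity.
  - refine (RetB_ind _ (fun x => RetB_ind _ (fun y => _))).
    rewrite ract_cls, lact_cls, Linv_cls, (ls_ract B HB). reflexivity.
  - refine (RetB_ind _ (fun x => RetB_ind _ (fun y => RetB_ind _ (fun z => _)))).
    rewrite !lact_cls, ract_cls, !lact_cls, (ls_braid B HB). reflexivity.
  - refine (RetB_ind _ (fun z => _)). exists (cls (Tinv B z)).
    rewrite Linv_cls, (Linv_Tinv B HB). reflexivity.
  - refine (RetB_ind _ (fun t => RetB_ind _ (fun t' => _))). rewrite !Linv_cls. intro H.
    apply cls_inj, (ret_rel_Tinv B HB) in H. rewrite !(Tinv_Linv B HB) in H. apply cls_eq, H.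
Qed.

Lemma Tinv_cls z : Tinv RB (cls z) = cls (Tinv B z).
Proof.
  apply (ls_diag_inj _ left_symset_RetB).
  rewrite (Linv_Tinv _ left_symset_RetB), Linv_cls, (Linv_Tinv B HB). reflexivity.
Qed.

Lemma wcls_app (u v : W) : wcls (u ++ v) = wcls u ++ wcls v.
Proof. apply map_app. Qed.

Lemma wcls_winv (u : W) : wcls (winv B u) = winv RB (wcls u).
Proof. unfold wcls, winv. rewrite map_rev, !map_map. reflexivity. Qed.

Lemma Lword_wcls (w : W) y : Lword RB (wcls w) (cls y) = cls (Lw w y).
Proof.
  induction w as [|[[|] x] w IH]; simpl; rewrite ?IH;
    [reflexivity | apply lact_cls | apply Linv_cls].
Qed.

Lemma mapL_wcls f f' (s : W) :
  (forall y, f' (cls y) = cls (f y)) -> mapL f' (wcls s) = wcls (mapL f s).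
Proof.
  intro H. unfold mapL, wcls. rewrite !map_map. apply map_ext. intros [b x]. simpl.
  rewrite H. reflexivity.
Qed.

Lemma to_ab_wcls (w : W) : to_ab (wcls w) = wcls (to_ab w).
Proof.
  induction w as [|[[|] x] w IH]; simpl; [reflexivity| |]; rewrite IH, ?Linv_cls;
    f_equal; apply mapL_wcls; intro; [apply lact_cls | apply Linv_cls].
Qed.

Lemma of_ab_wcls f f' (s : W) :
  (forall y, f' (cls y) = cls (f y)) -> of_ab f' (wcls s) = wcls (of_ab f s).
Proof.
  revert f f'. induction s as [|[[|] y] s IH]; intros f f' H; simpl; [reflexivity| |];
    rewrite H, ?Tinv_cls; f_equal; apply IH; intro z; rewrite H;
    [apply Linv_cls | apply lact_cls].
Qed.

Lemma wlact_wcls (a b : W) : wlact (wcls a) (wcls b) = wcls (wlact a b).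
Proof. unfold wlact. rewrite to_ab_wcls. apply of_ab_wcls, Lword_wcls. Qed.

Lemma wract_wcls (a b : W) : wract (wcls a) (wcls b) = wcls (wract a b).
Proof. unfold wract. rewrite !wcls_app, wcls_winv, wlact_wcls. reflexivity. Qed.

Lemma Lword_of_ab_ret f f' (s : W) :
  (forall y, sim (f y) (f' y)) -> forall z, Lw (of_ab f s) z = Lw (of_ab f' s) z.
Proof.
  revert f f'. induction s as [|[[|] y] s IH]; intros f f' H z; simpl; [reflexivity| |].
  - rewrite (IH _ (fun z0 => Li (f' y) (f' z0))).
    + apply H.
    + intro q. rewrite (Linv_ret_rel B HB (f y) (f' y)) by apply H. apply (ret_rel_Linv B HB), H.
  - assert (Ht : sim (Tinv B (f y)) (Tinv B (f' y))) by apply (ret_rel_Tinv B HB), H.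
    rewrite (IH _ (fun z0 => L (Tinv B (f' y)) (f' z0))).
    + apply (Linv_ret_rel B HB), Ht.
    + intro q. transitivity (L (Tinv B (f y)) (f' q)); [apply (ret_rel_lact B HB), H|].
      intro r. rewrite (Ht (f' q)). reflexivity.
Qed.

Lemma Lword_wlact_ret (a a' : W) : (forall y, sim (Lw a y) (Lw a' y)) ->
  forall b z, Lw (wlact a b) z = Lw (wlact a' b) z.
Proof. intros H b. apply Lword_of_ab_ret, H. Qed.

End Retraction.

(** * Retraction and permutation groups *)

Lemma bij_of_inj_surj {A C : Type} (f : A -> C) :
  (forall a a', f a = f a' -> a = a') -> (forall c, exists a, f a = c) -> bij f.
Proof.
  intros Hi Hs. exists (fun c => proj1_sig (constructive_indefinite_description _ (Hs c))).
  split.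
  - intro a. apply Hi. destruct (constructive_indefinite_description _ _). exact e.
  - intro c. destruct (constructive_indefinite_description _ _). exact e.
Qed.

Lemma SG_iso_refl S : SG_iso S S.
Proof.
  exists (fun x => x). split; [exists (fun x => x); split; reflexivity | split].
  - reflexivity.
  - intros. apply surjective_pairing.
Qed.

Lemma SG_iso_trans S1 S2 S3 : SG_iso S1 S2 -> SG_iso S2 S3 -> SG_iso S1 S3.
Proof.
  intros [f [[g [Hg1 Hg2]] [Hm Hs]]] [f' [[g' [Hg1' Hg2']] [Hm' Hs']]].
  exists (fun x => f' (f x)). split; [|split].
  - exists (fun z => g (g' z)). split; intro; [rewrite Hg1', Hg1 | rewrite Hg2, Hg2']; reflexivity.
  - intros a b. rewrite Hm, Hm'. reflexivity.
  - intros a b. rewrite Hs', Hs. reflexivity.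
Qed.

Lemma SG_iso_singleton S1 S2 : SG_iso S1 S2 -> (singleton (sg S1) <-> singleton (sg S2)).
Proof.
  intros [f [[g [Hg1 Hg2]] _]]. split; intros [a Ha].
  - exists (f a). intro b. rewrite <- (Hg2 b), (Ha (g b)). reflexivity.
  - exists (g a). intro b. rewrite <- (Hg1 b), (Ha (f b)). reflexivity.
Qed.

(* [RetSG] computes on representatives; this is what makes that harmless. *)
Definition ret_compatible (S : SymGroup) : Prop :=
  let R := ret_rel (SG_toB S) in
  forall x x' y y', R x x' -> R y y' ->
    R (smul S x y) (smul S x' y') /\ R (fst (ssig S x y)) (fst (ssig S x' y')) /\
    R (snd (ssig S x y)) (snd (ssig S x' y')).

Lemma RetSG_iso S1 S2 : SG_iso S1 S2 -> ret_compatible S2 -> SG_iso (RetSG S1) (RetSG S2).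
Proof.
  intros [f [[g [Hg1 Hg2]] [Hm Hs]]] HC.
  set (R1 := ret_rel (SG_toB S1)). set (R2 := ret_rel (SG_toB S2)).
  assert (Hf1 : forall a b, fst (ssig S2 (f a) (f b)) = f (fst (ssig S1 a b)))
    by (intros; rewrite Hs; reflexivity).
  assert (Hf2 : forall a b, snd (ssig S2 (f a) (f b)) = f (snd (ssig S1 a b)))
    by (intros; rewrite Hs; reflexivity).
  assert (T1 : forall a a', R1 a a' -> R2 (f a) (f a')).
  { intros a a' H z. unfold lact. simpl. rewrite <- (Hg2 z), !Hf1. f_equal. apply H. }
  assert (T2 : forall a a', R2 (f a) (f a') -> R1 a a').
  { intros a a' H z. unfold lact. simpl.
    rewrite <- (Hg1 (fst (ssig S1 a z))), <- (Hg1 (fst (ssig S1 a' z))), <- !Hf1.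
    f_equal. apply H. }
  exists (fun c => into R2 (f (pre R1 c))). split; [|split].
  - exists (fun d => into R1 (g (pre R2 d))). split.
    + intro c. rewrite <- (into_pre R1 c) at 2. apply (class_eq R1), T2. rewrite Hg2.
      apply (pre_class R2).
    + intro d. rewrite <- (into_pre R2 d) at 2. apply (class_eq R2).
      transitivity (f (g (pre R2 d))); [apply T1, (pre_class R1) | rewrite Hg2; intro; reflexivity].
  - intros a b. apply (class_eq R2). transitivity (f (smul S1 (pre R1 a) (pre R1 b))).
    + apply T1, (pre_class R1).
    + rewrite Hm. apply HC; symmetry; apply (pre_class R2).
  - intros a b. simpl. f_equal; apply (class_eq R2).
    + transitivity (fst (ssig S2 (f (pre R1 a)) (f (pre R1 b)))); [apply HC; apply (pre_class R2)|].
      rewrite Hf1. apply T1. symmetry. apply (pre_class R1).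
    + transitivity (snd (ssig S2 (f (pre R1 a)) (f (pre R1 b)))); [apply HC; apply (pre_class R2)|].
      rewrite Hf2. apply T1. symmetry. apply (pre_class R1).
Qed.

Lemma iterB_SG_toB k S : iterB k (SG_toB S) = SG_toB (iterSG k S).
Proof. induction k as [|k IH]; simpl; [|rewrite IH]; reflexivity. Qed.

Definition perm_word {B : BSet} (f : sg (PermG B)) : word B := pr (pre (Lmap B) f).
Definition perm_fun {B : BSet} (f : sg (PermG B)) : bs B -> bs B := proj1_sig f.

Section PermutationGroup.
Variable B : BSet.
Hypothesis HB : left_symset B.
Notation W := (word B).
Notation Lw := (Lword B).
Notation sim := (ret_rel B).
Notation RB := (RetB B).
Notation P := (PermG B).

Lemma perm_fun_word (f : sg P) y : perm_fun f y = Lw (perm_word f) y.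
Proof.
  unfold perm_fun, perm_word. rewrite <- (pre_spec (Lmap B) f), <- Lmap_cl by exact HB.
  rewrite cl_pr. reflexivity.
Qed.

Lemma perm_ext (f f' : sg P) : (forall y, perm_fun f y = perm_fun f' y) -> f = f'.
Proof.
  intro H. destruct f as [f Hf], f' as [f' Hf']. apply subset_eq_compat.
  apply functional_extensionality. exact H.
Qed.

Lemma perm_fun_into u y : perm_fun (into (Lmap B) u) y = Lmap B u y.
Proof. reflexivity. Qed.

Lemma perm_fun_mul (f g : sg P) y : perm_fun (smul P f g) y = perm_fun f (perm_fun g y).
Proof. simpl. rewrite (Lmap_mul B HB). unfold perm_fun. rewrite !pre_spec. reflexivity. Qed.

Lemma perm_fun_lact (f g : sg P) y :
  perm_fun (fst (ssig P f g)) y = Lw (wlact (perm_word f) (perm_word g)) y.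
Proof. simpl. rewrite (rG_eq B HB). apply (f_equal (fun h => h y)), (Lmap_cl B HB). Qed.

Lemma perm_fun_ract (f g : sg P) y :
  perm_fun (snd (ssig P f g)) y = Lw (wract (perm_word f) (perm_word g)) y.
Proof. simpl. rewrite (rG_eq B HB). apply (f_equal (fun h => h y)), (Lmap_cl B HB). Qed.

Lemma ret_rel_PermG (f f' : sg P) :
  ret_rel (SG_toB P) f f' <-> forall y, sim (perm_fun f y) (perm_fun f' y).
Proof.
  set (gy y := into (Lmap B) (Giota B y)).
  assert (Hgy : forall y q, Lw (perm_word (gy y)) q = Lw [(true, y)] q).
  { intros y q. rewrite <- perm_fun_word. apply (Lmap_iota B HB). }
  split.
  - intros H y z. pose proof (f_equal (fun u => perm_fun u z) (H (gy y))) as E.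
    change (perm_fun (fst (ssig P f (gy y))) z = perm_fun (fst (ssig P f' (gy y))) z) in E.
    rewrite !perm_fun_lact in E.
    rewrite !(Lword_wlact B HB _ _ _ _ (fun _ => eq_refl) (Hgy y)), !wlact_gen in E.
    simpl in E. rewrite <- !perm_fun_word in E. exact E.
  - intros H z. apply perm_ext. intro y.
    change (perm_fun (fst (ssig P f z)) y = perm_fun (fst (ssig P f' z)) y).
    rewrite !perm_fun_lact.
    apply (Lword_wlact_ret B HB). intro q. rewrite <- !perm_fun_word. apply H.
Qed.

Definition perm_ret (f : sg P) (q : bs RB) : bs RB := Lword RB (wcls (perm_word f)) q.

Lemma perm_ret_cls f y : perm_ret f (cls y) = cls (perm_fun f y).
Proof. unfold perm_ret. rewrite (Lword_wcls B HB), perm_fun_word. reflexivity. Qed.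

Lemma ret_rel_Lword_iff (a a' : W) :
  (forall y, sim (Lw a y) (Lw a' y)) <->
  (forall q, Lword RB (wcls a) q = Lword RB (wcls a') q).
Proof.
  split.
  - intros H. apply RetB_ind. intro y. rewrite !(Lword_wcls B HB). apply cls_eq, H.
  - intros H y. apply cls_inj. rewrite <- !(Lword_wcls B HB). apply H.
Qed.

Lemma ret_rel_PermG_iff (f f' : sg P) :
  ret_rel (SG_toB P) f f' <-> forall q, perm_ret f q = perm_ret f' q.
Proof.
  rewrite ret_rel_PermG. unfold perm_ret. rewrite <- ret_rel_Lword_iff.
  split; intros H y; [rewrite <- !perm_fun_word | rewrite !perm_fun_word]; apply H.
Qed.

Lemma perm_ret_mul f g q : perm_ret (smul P f g) q = perm_ret f (perm_ret g q).
Proof. revert q. apply RetB_ind. intro y. rewrite !perm_ret_cls, perm_fun_mul. reflexivity. Qed.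

Lemma perm_ret_lact f g q :
  perm_ret (fst (ssig P f g)) q = Lword RB (wlact (wcls (perm_word f)) (wcls (perm_word g))) q.
Proof.
  revert q. apply RetB_ind. intro y.
  rewrite perm_ret_cls, perm_fun_lact, (wlact_wcls B HB), (Lword_wcls B HB). reflexivity.
Qed.

Lemma perm_ret_ract f g q :
  perm_ret (snd (ssig P f g)) q = Lword RB (wract (wcls (perm_word f)) (wcls (perm_word g))) q.
Proof.
  revert q. apply RetB_ind. intro y.
  rewrite perm_ret_cls, perm_fun_ract, (wract_wcls B HB), (Lword_wcls B HB). reflexivity.
Qed.

Lemma ret_compatible_PermG : ret_compatible P.
Proof.
  pose proof (left_symset_RetB B HB) as HR.
  intros x x' y y' Hx Hy. rewrite !ret_rel_PermG_iff in *. split; [|split]; intro q.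
  - rewrite !perm_ret_mul, Hy, Hx. reflexivity.
  - rewrite !perm_ret_lact. apply (Lword_wlact RB HR); assumption.
  - rewrite !perm_ret_ract. apply (Lword_wract_ext RB HR); assumption.
Qed.

End PermutationGroup.

Section RetractionIsomorphisms.
Variable B : BSet.
Hypothesis HB : left_symset B.
Notation X := (bs B).
Notation RB := (RetB B).
Notation P := (PermG B).
Notation RP := (ret_rel (SG_toB P)).
Notation RG := (ret_rel (SG_toB (GX B))).

Definition ret_perm (c : sg (RetSG P)) : sg (PermG RB) :=
  into (Lmap RB) (cl (wcls (perm_word (pre RP c)))).

Lemma perm_fun_ret_perm c q : perm_fun (ret_perm c) q = perm_ret B (pre RP c) q.
Proof.
  unfold ret_perm. rewrite perm_fun_into, (Lmap_cl RB (left_symset_RetB B HB)). reflexivity.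
Qed.

Lemma perm_ret_pre_class (x : sg P) q : perm_ret B (pre RP (into RP x)) q = perm_ret B x q.
Proof. apply (ret_rel_PermG_iff B HB), (pre_class RP). Qed.

Lemma ret_perm_surj (g : sg (PermG RB)) : exists c, ret_perm c = g.
Proof.
  set (w := map (fun p => (fst p, pre (ret_rel B) (snd p))) (perm_word g)).
  assert (Hw : wcls w = perm_word g).
  { unfold w, wcls. rewrite map_map. transitivity (map (fun p => p) (perm_word g)).
    - apply map_ext. intros [b x]. simpl. unfold cls. rewrite into_pre. reflexivity.
    - apply map_id. }
  exists (into RP (into (Lmap B) (cl w))). apply (perm_ext RB). intro q.
  rewrite perm_fun_ret_perm, perm_ret_pre_class, (perm_fun_word RB (left_symset_RetB B HB)).
  rewrite <- Hw. unfold perm_ret. apply (ret_rel_Lword_iff B HB). intro y.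
  rewrite <- (perm_fun_word B HB), perm_fun_into, (Lmap_cl B HB). reflexivity.
Qed.

Lemma RetSG_PermG_iso : SG_iso (RetSG P) (PermG RB).
Proof.
  pose proof (left_symset_RetB B HB) as HR.
  exists ret_perm. split; [|split].
  - apply bij_of_inj_surj; [|exact ret_perm_surj].
    intros c c' H. rewrite <- (into_pre RP c), <- (into_pre RP c').
    apply (class_eq RP), (ret_rel_PermG_iff B HB). intro q.
    rewrite <- !perm_fun_ret_perm, H. reflexivity.
  - intros a b. apply (perm_ext RB). intro q.
    rewrite (perm_fun_mul RB HR), !perm_fun_ret_perm.
    change (smul (RetSG P) a b) with (into RP (smul P (pre RP a) (pre RP b))).
    rewrite perm_ret_pre_class, (perm_ret_mul B HB). reflexivity.
  - intros a b. rewrite (surjective_pairing (ssig (PermG RB) _ _)).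
    f_equal; apply (perm_ext RB); intro q.
    + rewrite (perm_fun_lact RB HR), perm_fun_ret_perm.
      change (fst (ssig (RetSG P) a b)) with (into RP (fst (ssig P (pre RP a) (pre RP b)))).
      rewrite perm_ret_pre_class, (perm_ret_lact B HB).
      apply (Lword_wlact RB HR); intro; rewrite <- (perm_fun_word RB HR), perm_fun_ret_perm;
        reflexivity.
    + rewrite (perm_fun_ract RB HR), perm_fun_ret_perm.
      change (snd (ssig (RetSG P) a b)) with (into RP (snd (ssig P (pre RP a) (pre RP b)))).
      rewrite perm_ret_pre_class, (perm_ret_ract B HB).
      apply (Lword_wract_ext RB HR); intro; rewrite <- (perm_fun_word RB HR), perm_fun_ret_perm;
        reflexivity.
Qed.

Lemma ab_gen_inj p q : abrel B [(true, p)] [(true, q)] -> p = q.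
Proof.
  intro H. set (h := fun x : X => if excluded_middle_informative (x = p) then 1%Z else 0%Z).
  apply (abrel_wsum B h) in H. simpl in H. unfold h in H.
  destruct (excluded_middle_informative (p = p)) as [_|n]; [|contradiction n; reflexivity].
  destruct (excluded_middle_informative (q = p)) as [e|_]; [auto | lia].
Qed.

Lemma ret_rel_GX a a' : RG a a' <-> forall y, Lmap B a y = Lmap B a' y.
Proof.
  split.
  - intros H y. specialize (H (Giota B y)). unfold lact in H. simpl in H.
    change (ssig (GX B)) with (rG B) in H. rewrite (rG_eq B HB) in H.
    apply cl_inj in H. rewrite !Giota_cl in H.
    rewrite !(wlact_grel B HB _ _ (reflexivity _) _ _ (pr_cl B [(true, y)])) in H.
    rewrite !wlact_gen in H. apply (abrel_to_ab B HB) in H. exact (ab_gen_inj _ _ H).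
  - intros H z. unfold lact. simpl. change (ssig (GX B)) with (rG B). rewrite (rG_eq B HB).
    unfold sigmaG. simpl. f_equal. apply (wlact_ext B). intro y.
    rewrite <- !(Lmap_cl B HB), !cl_pr. apply H.
Qed.

Lemma Lmap_pre_class a y : Lmap B (pre RG (into RG a)) y = Lmap B a y.
Proof. apply ret_rel_GX, (pre_class RG). Qed.

(* Ret(G) = G / ker L; send a class to its image under L. *)
Definition ret_GX_perm (c : sg (RetSG (GX B))) : sg P := into (Lmap B) (pre RG c).

Lemma RetSG_GX_iso : SG_iso (RetSG (GX B)) P.
Proof.
  exists ret_GX_perm. split; [|split].
  - apply bij_of_inj_surj.
    + intros c c' H. rewrite <- (into_pre RG c), <- (into_pre RG c').
      apply (class_eq RG), ret_rel_GX. intro y. exact (f_equal (fun u => perm_fun u y) H).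
    + intro g. exists (into RG (pre (Lmap B) g)). apply (perm_ext B). intro y.
      unfold ret_GX_perm. rewrite perm_fun_into, Lmap_pre_class. unfold perm_fun.
      rewrite pre_spec. reflexivity.
  - intros a b. apply (perm_ext B). intro y. rewrite (perm_fun_mul B HB).
    unfold ret_GX_perm. rewrite !perm_fun_into.
    change (smul (RetSG (GX B)) a b) with (into RG (Gmul B (pre RG a) (pre RG b))).
    rewrite Lmap_pre_class, (Lmap_mul B HB). reflexivity.
  - intros a b. rewrite (surjective_pairing (ssig P _ _)).
    f_equal; apply (perm_ext B); intro y; unfold ret_GX_perm at 3; rewrite perm_fun_into.
    + change (fst (ssig (RetSG (GX B)) a b)) with (into RG (fst (rG B (pre RG a) (pre RG b)))).
      rewrite (perm_fun_lact B HB), Lmap_pre_class, (rG_eq B HB). unfold sigmaG. simpl.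
      rewrite (Lmap_cl B HB).
      apply (Lword_wlact B HB); intro; rewrite <- (perm_fun_word B HB); reflexivity.
    + change (snd (ssig (RetSG (GX B)) a b)) with (into RG (snd (rG B (pre RG a) (pre RG b)))).
      rewrite (perm_fun_ract B HB), Lmap_pre_class, (rG_eq B HB). unfold sigmaG. simpl.
      rewrite (Lmap_cl B HB).
      apply (Lword_wract_ext B HB); intro; rewrite <- (perm_fun_word B HB); reflexivity.
Qed.

(* The generators have abelian coordinate sum 1, the identity 0. *)
Lemma GX_not_singleton : ~ singleton (Gcar B).
Proof.
  intros [a Ha]. destruct (ls_inhabited B HB) as [x].
  assert (E : Gone B = Giota B x) by (rewrite (Ha (Gone B)), (Ha (Giota B x)); reflexivity).
  apply cl_inj, (abrel_to_ab B HB), (abrel_wsum B (fun _ => 1%Z)) in E. simpl in E. lia.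
Qed.

End RetractionIsomorphisms.

(** * Symmetric sets *)

Section SymmetricSet.
Variable B : BSet.
Hypothesis HB : is_symset B.
Notation L := (lact B).
Notation Li := (Linv B).

Lemma symset_ract_eq x y : ract B x y = Li (L x y) x.
Proof.
  destruct HB as (_ & _ & Hl & _ & Hinv & _). apply (bij_inj _ (Hl (L x y))).
  rewrite (lact_Linv_of_bij B _ (Hl _)). exact (f_equal fst (Hinv x y)).
Qed.

(* The first components of the braid relation r12 r23 r12 = r23 r12 r23 at (x, y, z). *)
Lemma symset_braid x y z : L x (L y z) = L (L x y) (L (ract B x y) z).
Proof.
  destruct HB as (_ & _ & _ & _ & _ & Hbr). specialize (Hbr (x, y, z)).
  unfold r12, r23 in Hbr. unfold lact, ract.
  destruct (br B x y) as [a b]. simpl.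
  destruct (br B b z) as [c d]. destruct (br B a c) as [e f] eqn:E3.
  destruct (br B y z) as [c' d']. destruct (br B x c') as [e' f'] eqn:E5.
  destruct (br B f' d') as [g h].
  injection Hbr. intros _ _ He. simpl. rewrite E5, E3. symmetry. exact He.
Qed.

Lemma symset_ract_diag u : ract B u (Li u u) = Li u u.
Proof.
  destruct HB as (_ & _ & Hl & _). rewrite symset_ract_eq, (lact_Linv_of_bij B _ (Hl u)).
  reflexivity.
Qed.

(* The fixed point t of x |-> x^z satisfies Li t t = z: r(t, z) = (L_t z, z), and by
   involutivity L_t z is a fixed point of x |-> x^z too. *)
Lemma symset_diag_surj z : exists t, Li t t = z.
Proof.
  destruct HB as (_ & _ & Hl & Hr & Hinv & _). destruct (Hr z) as [g [_ Hg]].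
  set (t := g z). assert (Ht : ract B t z = z) by apply Hg.
  assert (Hw : ract B (L t z) z = z).
  { pose proof (f_equal snd (Hinv t z)) as E. change (ract B (L t z) (ract B t z) = z) in E.
    rewrite Ht in E. exact E. }
  exists t. apply (bij_inj _ (Hl t)). rewrite (lact_Linv_of_bij B _ (Hl t)).
  symmetry. apply (bij_inj _ (Hr z)). simpl. rewrite Hw, Ht. reflexivity.
Qed.

Lemma symset_diag_inj t t' : Li t t = Li t' t' -> t = t'.
Proof.
  destruct HB as (_ & _ & _ & Hr & _). intro H. apply (bij_inj _ (Hr (Li t t))). simpl.
  rewrite symset_ract_diag. rewrite H at 1 2. rewrite symset_ract_diag. reflexivity.
Qed.

Lemma left_symset_of_symset : left_symset B.
Proof.
  destruct HB as (Hinh & _ & Hl & _). split; [exact Hinh | exact Hl | exact symset_ract_eq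
    | exact symset_braid | exact symset_diag_surj | exact symset_diag_inj].
Qed.

End SymmetricSet.

Lemma left_symset_iterB B : left_symset B -> forall j, left_symset (iterB j B).
Proof. intros HB j. induction j as [|j IH]; [exact HB | exact (left_symset_RetB _ IH)]. Qed.

Lemma iterSG_PermG_iso B : left_symset B ->
  forall k, SG_iso (iterSG k (PermG B)) (PermG (iterB k B)).
Proof.
  intros HB k. induction k as [|k IH]; [apply SG_iso_refl|].
  pose proof (left_symset_iterB B HB k) as Hk.
  exact (SG_iso_trans _ _ _ (RetSG_iso _ _ IH (ret_compatible_PermG _ Hk))
           (RetSG_PermG_iso _ Hk)).
Qed.

Lemma iterSG_GX_iso B : left_symset B ->
  forall j, SG_iso (iterSG (S j) (GX B)) (PermG (iterB j B)).
Proof.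
  intros HB j. induction j as [|j IH]; [exact (RetSG_GX_iso B HB)|].
  pose proof (left_symset_iterB B HB j) as Hj.
  exact (SG_iso_trans _ _ _ (RetSG_iso _ _ IH (ret_compatible_PermG _ Hj))
           (RetSG_PermG_iso _ Hj)).
Qed.

Lemma mpl_succ_iff (S1 S2 : SymGroup) :
  ~ singleton (sg S1) ->
  (forall k, singleton (sg (iterSG (S k) S1)) <-> singleton (sg (iterSG k S2))) ->
  forall m, mpl (SG_toB S1) (S m) <-> mpl (SG_toB S2) m.
Proof.
  intros H0 Hk m. unfold mpl. setoid_rewrite iterB_SG_toB. simpl. split.
  - intros [Hs Hn]. split; [apply Hk, Hs|]. intros k Hkm Hsk.
    apply (Hn (S k)); [lia | apply Hk, Hsk].
  - intros [Hs Hn]. split; [apply Hk, Hs|]. intros [|k] Hkm Hsk; [exact (H0 Hsk)|].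
    apply (Hn k); [lia | apply Hk, Hsk].
Qed.

Theorem mainTheorem8 (B : BSet) (HB : is_symset B) :
  SG_iso (RetSG (PermG B)) (PermG (RetB B)) /\
  (forall j : nat, SG_iso (iterSG (S j) (GX B)) (PermG (iterB j B))) /\
  (forall m : nat, mpl (SG_toB (GX B)) (S m) <-> mpl (SG_toB (PermG B)) m).
Proof.
  pose proof (left_symset_of_symset B HB) as HL.
  split; [|split].
  - exact (RetSG_PermG_iso B HL).
  - exact (iterSG_GX_iso B HL).
  - apply mpl_succ_iff; [exact (GX_not_singleton B HL)|]. intro k.
    rewrite (SG_iso_singleton _ _ (iterSG_GX_iso B HL k)).
    symmetry. exact (SG_iso_singleton _ _ (iterSG_PermG_iso B HL k)).
Qed.
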